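(* Let $S_f$ and $S_g$ be two equivalent inequality sets in $\mathbf{x}=(x_1,\ldots,x_n)$ (i.e., with the same solution set in $\mathbb{R}^n$), and fix the variable order $x_1\prec\cdots\prec x_n$. Then their reduced minimal characterization sets are the same: the equality parts coincide and the inequality parts are trivially equivalent.
   Context: An inequality set is a finite set $S=\{f_i\ge 0: i=1,\ldots,m\}$ with each $f_i$ a nonzero homogeneous linear polynomial in $\mathbf{x}$ with real coefficients; its solutions are the points of $\mathbb{R}^n$ satisfying all inequalities; a subset of $S$ is an inequality set whose polynomials form a subset of $\{f_1,\ldots,f_m\}$. The equality $f_k=0$ is an implied equality of $S$ if $f_k(\mathbf{x})=0$ for every solution of $S$. Inequalities $f_1\ge0,\ldots,f_k\ge0$ imply $f\ge0$ if every $\mathbf{x}$ satisfying the former satisfies $f(\mathbf{x})\ge0$; an inequality of a set is redundant if implied by the other inequalities of the set. Two inequality sets are equivalent if they have the same solution set. A subset $S'$ of $S$ is a minimal characterization set of $S$ if $S'$ is equivalent to $S$ and contains no redundant inequality. Two inequalities $f\ge0$, $g\ge 0$ are trivially equivalent if $f=c\,g$ for some real $c>0$; two inequality sets are trivially equivalent if they have the same number of inequalities and each inequality of either set is trivially equivalent to some inequality of the other. For a finite system $E$ of homogeneous linear equations of rank $\tilde n$, its Gauss–Jordan reduced form (reduced row echelon form) w.r.t. $x_1\prec\cdots\prec x_n$ is the unique equivalent system $\{x_{k_i}-U_i=0: i=1,\ldots,\tilde n\}$, $k_1<\cdots<k_{\tilde n}$, each $U_i$ a real linear combination of non-pivot variables.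 For an inequality set $S_f=\{f_i\ge0\}$: let $I$ be the set of indices $k$ with $f_k=0$ an implied equality of $S_f$, $E=\{f_k=0:k\in I\}$, and $\widetilde E=\{x_{k_i}-U_i=0\}$ its Gauss–Jordan reduced form; let $R_f$ be the set of nonzero polynomials obtained from $f_j$, $j\notin I$, by substituting $U_i$ for $x_{k_i}$ for all $i$. The reduced minimal characterization set of $S_f$ is $\widetilde{E}\cup S_{r'}$, where $S_{r'}$ is a minimal characterization set of $\{g\ge 0: g\in R_f\}$ (unique up to trivial equivalence). *)

(* Homogeneous linear polynomials in x_1..x_n are represented
   by their coefficient row vectors 'rV[R]_n; points of R^n are also 'rV[R]_n. *)
From HB Require Import structures.
From mathcomp Require Import all_boot all_order all_algebra.
Set Implicit Arguments. Unset Strict Implicit. Unset Printing Implicit Defensive.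
Import Order.TTheory GRing.Theory Num.Theory.
Local Open Scope ring_scope.

Section Defs.
Variables (R : realFieldType) (n : nat).
Notation vec := 'rV[R]_n.

Definition linE (f x : vec) : R := \sum_(i < n) f 0 i * x 0 i.

Definition solP (P : vec -> Prop) (x : vec) : Prop :=
  forall g, P g -> 0 <= linE g x.

Definition memS (S : seq vec) : vec -> Prop := fun f => f \in S.

Definition equiv_ineq (P Q : vec -> Prop) : Prop :=
  forall x, solP P x <-> solP Q x.

Definition implied_eq (S : seq vec) (f : vec) : Prop :=
  forall x, solP (memS S) x -> linE f x = 0.

Definition impliesP (P : vec -> Prop) (f : vec) : Prop :=
  forall x, solP P x -> 0 <= linE f x.

Definition redundant (S' : seq vec) (f : vec) : Prop :=
  impliesP (memS [seq g <- S' | g != f]) f.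

Definition min_char_set (P : vec -> Prop) (S' : seq vec) : Prop :=
  [/\ uniq S', (forall f, f \in S' -> P f), equiv_ineq (memS S') P &
      (forall f, f \in S' -> ~ redundant S' f)].

Definition triv_eq (f g : vec) : Prop := exists c : R, 0 < c /\ f = c *: g.

Definition triv_eq_sets (S T : seq vec) : Prop :=
  [/\ size (undup S) = size (undup T),
      (forall f, f \in S -> exists2 g, g \in T & triv_eq f g) &
      (forall g, g \in T -> exists2 f, f \in S & triv_eq g f)].

Definition coef (f : vec) (p : nat) : R := \sum_(l < n | val l == p) f 0 l.

(* E (rows x_{k_i} - U_i, pivots ps = [k_1;...;k_t], 0-based) is the
   Gauss-Jordan reduced form of the system of implied equalities of S *)
Definition is_GJ (S : seq vec) (E : seq vec) (ps : seq nat) : Prop :=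
  [/\ size ps = size E, sorted ltn ps & all (fun p => p < n)%N ps] /\
  [/\ (forall (i : nat) (l : 'I_n), (i < size E)%N ->
          (val l < nth 0%N ps i)%N -> (nth 0 E i) 0 l = 0),
      (forall (i j : nat) (l : 'I_n), (i < size E)%N -> (j < size E)%N ->
          val l = nth 0%N ps j -> (nth 0 E i) 0 l = (i == j)%:R) &
      (forall x, (forall e, e \in E -> linE e x = 0) <->
                 (forall f, f \in S -> implied_eq S f -> linE f x = 0))].

(* substitute U_i for x_{k_i} (i.e. x_{k_i} - e_i) in f *)
Definition reduce (E : seq vec) (ps : seq nat) (f : vec) : vec :=
  f - \sum_(i < size E) coef f (nth 0%N ps i) *: nth 0 E i.

Definition in_Rset (S : seq vec) (E : seq vec) (ps : seq nat) (g : vec) : Prop :=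
  g != 0 /\ exists2 f, f \in S & ~ implied_eq S f /\ g = reduce E ps f.

End Defs.

(* Everything is read off the solution cone C of S.  A relative-interior point
   of C can be moved in every direction of the kernel of the implied equalities,
   so that kernel is the linear span of C; hence E_f and E_g have the same null
   space.  A reduced row echelon form is determined by its null space: the
   pivots are the coordinates at which no null vector can have its last nonzero
   entry, and each row is the unique form vanishing on the null space with
   prescribed pivot coefficients.  Substituting the pivots is precomposition
   with the projection onto the null space along the pivot coordinates, so R_f
   and R_g cut out the same cone, and it has interior points.  In such a cone an
   irredundant inequality t >= 0 is the only one vanishing at some point w; an
   equivalent description must also have an inequality t' vanishing at w, and
   near w the cone is {t >= 0}, so t' >= 0 follows from t >= 0 and t' is a
   positive multiple of t. *)

From mathcomp Require Import all_boot all_order all_algebra.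
From mathcomp Require Import lra.
From Stdlib Require Import Classical.
Set Implicit Arguments. Unset Strict Implicit. Unset Printing Implicit Defensive.
Import Order.TTheory GRing.Theory Num.Theory.
(* Imported last so that [solP] is not shadowed by the lemma [GRing.solP]. *)
Local Open Scope ring_scope.

Section LinearForm.
Variables (R : realFieldType) (n : nat).
Notation vec := 'rV[R]_n.
Implicit Types (f g x y : vec).

Lemma linEC f x : linE f x = linE x f.
Proof. by apply: eq_bigr => i _; rewrite mulrC. Qed.

Lemma linEDl f g x : linE (f + g) x = linE f x + linE g x.
Proof. by rewrite /linE -big_split; apply: eq_bigr => i _; rewrite mxE mulrDl. Qed.

Lemma linENl f x : linE (- f) x = - linE f x.
Proof. by rewrite /linE -sumrN; apply: eq_bigr => i _; rewrite mxE mulNr. Qed.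

Lemma linEBl f g x : linE (f - g) x = linE f x - linE g x.
Proof. by rewrite linEDl linENl. Qed.

Lemma linEZl c f x : linE (c *: f) x = c * linE f x.
Proof. by rewrite /linE mulr_sumr; apply: eq_bigr => i _; rewrite mxE mulrA. Qed.

Lemma linE0l x : linE 0 x = 0.
Proof. by rewrite /linE big1 // => i _; rewrite mxE mul0r. Qed.

Lemma linE_suml m (F : 'I_m -> vec) x :
  linE (\sum_(i < m) F i) x = \sum_(i < m) linE (F i) x.
Proof.
rewrite /linE exchange_big; apply: eq_bigr => i _.
by rewrite summxE mulr_suml.
Qed.

Lemma linEDr f x y : linE f (x + y) = linE f x + linE f y.
Proof. by rewrite !(linEC f) linEDl. Qed.

Lemma linENr f x : linE f (- x) = - linE f x.
Proof. by rewrite !(linEC f) linENl. Qed.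

Lemma linEBr f x y : linE f (x - y) = linE f x - linE f y.
Proof. by rewrite !(linEC f) linEBl. Qed.

Lemma linEZr c f x : linE f (c *: x) = c * linE f x.
Proof. by rewrite !(linEC f) linEZl. Qed.

Lemma linE0r f : linE f 0 = 0.
Proof. by rewrite linEC linE0l. Qed.

Lemma linE_sumr m (F : 'I_m -> vec) f :
  linE f (\sum_(i < m) F i) = \sum_(i < m) linE f (F i).
Proof. by rewrite linEC linE_suml; apply: eq_bigr => i _; rewrite linEC. Qed.

Lemma linE_self_gt0 f : f != 0 -> 0 < linE f f.
Proof.
move=> f_neq0; have sqr_ge0 i : 0 <= f 0 i * f 0 i by rewrite -expr2 sqr_ge0.
rewrite lt_def sumr_ge0 ?andbT // psumr_eq0 //.
apply: contra f_neq0 => /allP f0; apply/eqP/rowP => i; rewrite mxE.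
by have := f0 i (mem_index_enum i); rewrite /= mulf_eq0 orbb => /eqP.
Qed.

Lemma linE_self_eq0 f : linE f f = 0 -> f = 0.
Proof. by apply: contra_eq => /linE_self_gt0 /gt_eqF ->. Qed.

(* The [k]-th standard basis row; it is [0] when [n <= k]. *)
Definition unit_row (k : nat) : vec := \row_j ((val j == k)%:R).

Lemma linE_unit_row f k : linE f (unit_row k) = coef f k.
Proof.
rewrite /linE /coef [RHS]big_mkcond; apply: eq_bigr => i _.
by rewrite mxE; case: (val i == k); rewrite ?mulr1 ?mulr0.
Qed.

Lemma coef_ord f (i : 'I_n) : coef f i = f 0 i.
Proof. by rewrite /coef (big_pred1 i). Qed.

Lemma coef_unit_row a b : coef (unit_row a) b = ((a == b) && (b < n)%N)%:R.
Proof.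
rewrite /coef; case: (ltnP b n) => [b_lt_n|n_le_b].
  by rewrite (big_pred1 (Ordinal b_lt_n)) // mxE andbT eq_sym.
rewrite andbF big_pred0 // => i; apply/negbTE/eqP => ib.
by move: n_le_b; rewrite -ib leqNgt ltn_ord.
Qed.

End LinearForm.

Arguments unit_row {R n} k.

Section Cone.
Variables (R : realFieldType) (n : nat).
Notation vec := 'rV[R]_n.
Implicit Types (S T : seq vec) (f g s t v w x : vec).

Definition implied_kernel S x :=
  forall f, f \in S -> implied_eq S f -> linE f x = 0.

Lemma small_perturbation T w v :
  (forall s, s \in T -> 0 <= linE s w /\ (linE s w = 0 -> 0 <= linE s v)) ->
  exists2 e : R, 0 < e & forall d, 0 < d <= e -> solP (memS T) (w + d *: v).
Proof.
elim: T => [|s T IH] sign_wv; first by exists 1 => // d _ g; rewrite /memS in_nil.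
have [t Tt|e e_gt0 Te] := IH; first by apply: sign_wv; rewrite inE Tt orbT.
have [sw_ge0 sw0_sv] := sign_wv s (mem_head _ _).
have [e1 e1_gt0 se1] : exists2 e1 : R, 0 < e1 &
    forall d, 0 < d <= e1 -> 0 <= linE s w + d * linE s v.
  have [sv_ge0|sv_lt0] := lerP 0 (linE s v).
    by exists 1 => // d /andP[d_gt0 _]; rewrite addr_ge0 // mulr_ge0 // ltW.
  have sw_gt0 : 0 < linE s w.
    by rewrite lt_def sw_ge0 andbT; apply: contraTneq sv_lt0 => /sw0_sv; rewrite -leNgt.
  exists (linE s w / - linE s v); first by rewrite divr_gt0 ?oppr_gt0.
  by move=> d /andP[_]; rewrite ler_pdivlMr ?oppr_gt0 //; lra.
exists (Num.min e e1) => [|d]; first by rewrite lt_min e_gt0.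
rewrite le_min => /and3P[d_gt0 d_le_e d_le_e1] g; rewrite /memS inE => /orP[/eqP->|Tg].
  by rewrite linEDr linEZr se1 ?d_gt0.
by apply: Te; rewrite ?d_gt0.
Qed.

Lemma exists_relint_point S : exists2 x0, solP (memS S) x0 &
  forall f, f \in S -> ~ implied_eq S f -> 0 < linE f x0.
Proof.
suff /(_ S) [x0 Sx0 pos_x0] : forall L : seq vec, exists2 x0, solP (memS S) x0 &
    forall f, f \in L -> f \in S -> ~ implied_eq S f -> 0 < linE f x0.
  by exists x0 => // f Sf; apply: pos_x0.
elim=> [|f L [x Sx pos_x]].
  by exists 0 => [g _|f]; rewrite ?linE0r ?in_nil.
have [[Sf not_impl_f]|] := classic (f \in S /\ ~ implied_eq S f); last first.
  move=> not_f; exists x => // g; rewrite inE => /orP[/eqP-> Sg ng|]; last exact: pos_x.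
  by case: not_f.
have [y Sy fy_gt0] : exists2 y, solP (memS S) y & 0 < linE f y.
  apply: NNPP => no_y; apply: not_impl_f => y Sy; apply/eqP.
  by rewrite eq_le Sy // andbT leNgt; apply/negP => fy; apply: no_y; exists y.
exists (x + y) => [g Sg|g]; first by rewrite linEDr addr_ge0 ?Sx ?Sy.
rewrite inE linEDr => /orP[/eqP-> _ _|Lg Sg ng]; first by rewrite ltr_wpDl ?Sx.
by rewrite ltr_pwDl ?Sy ?pos_x.
Qed.

Lemma implied_kernel_sub Sf Sg : equiv_ineq (memS Sf) (memS Sg) ->
  forall x, implied_kernel Sf x -> implied_kernel Sg x.
Proof.
move=> eqS x ker_x g Sgg impl_g.
have [x0 Sx0 pos_x0] := exists_relint_point Sf.
have [e e_gt0 Se] : exists2 e : R, 0 < e &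
    forall d, 0 < d <= e -> solP (memS Sf) (x0 + d *: x).
  apply: small_perturbation => s Ss; split; first exact: Sx0.
  have [impl_s _|not_impl_s] := classic (implied_eq Sf s); first by rewrite ker_x.
  by move/eqP; rewrite gt_eqF ?pos_x0.
have Sg_x0 : solP (memS Sg) x0 by apply/eqS.
have Sg_xe : solP (memS Sg) (x0 + e *: x) by apply/eqS/Se; rewrite e_gt0 lexx.
have := impl_g _ Sg_xe; rewrite linEDr linEZr (impl_g _ Sg_x0) add0r => /eqP.
by rewrite mulf_eq0 gt_eqF //= => /eqP.
Qed.

End Cone.

Lemma sum_delta (V : nmodType) m (F : nat -> V) i : (i < m)%N ->
  \sum_(j < m) F j *+ (j == i :> nat) = F i.
Proof.
by move=> i_lt; under eq_bigr do rewrite mulrb; rewrite -big_mkcond big_ord1_eq i_lt.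
Qed.

Section ReducedRowEchelon.
Variables (R : realFieldType) (n : nat).
Notation vec := 'rV[R]_n.
Implicit Types (S E : seq vec) (ps : seq nat) (f h x : vec).

Definition rref E ps :=
  [/\ size ps = size E, sorted ltn ps, all (fun p => p < n)%N ps,
      forall i (l : 'I_n), (i < size E)%N -> (val l < nth 0%N ps i)%N ->
        nth 0 E i 0 l = 0 &
      forall i j (l : 'I_n), (i < size E)%N -> (j < size E)%N ->
        val l = nth 0%N ps j -> nth 0 E i 0 l = (i == j)%:R].

Definition kernel E x := forall e, e \in E -> linE e x = 0.

Lemma is_GJ_rref S E ps : is_GJ S E ps ->
  rref E ps /\ forall x, kernel E x <-> implied_kernel S x.
Proof. by case=> -[? ? ?] [? ? ?]. Qed.

Definition leads_in (K : vec -> Prop) (p : nat) :=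
  exists2 z, K z & coef z p = 1 /\ forall m, (p < m)%N -> coef z m = 0.

Section Rref.
Variables (E : seq vec) (ps : seq nat).
Hypothesis rrefE : rref E ps.

Lemma pivot_lt_n j : (j < size E)%N -> (nth 0%N ps j < n)%N.
Proof.
by case: rrefE => size_ps _ /allP ps_lt _ _ j_lt; rewrite ps_lt // mem_nth ?size_ps.
Qed.

Lemma coef_row_pivot i j : (i < size E)%N -> (j < size E)%N ->
  coef (nth 0 E i) (nth 0%N ps j) = (i == j)%:R.
Proof.
move=> i_lt j_lt; case: rrefE => _ _ _ _ row_pivot.
by rewrite -[nth 0%N ps j]/(val (Ordinal (pivot_lt_n j_lt))) coef_ord (row_pivot _ j).
Qed.

(* The projection onto the kernel of [E] along the pivot coordinates. *)
Definition kproj x :=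
  x - \sum_(j < size E) linE (nth 0 E j) x *: unit_row (nth 0%N ps j).

Lemma kernel_kproj x : kernel E (kproj x).
Proof.
move=> e /(nthP 0) [i i_lt <-]; rewrite linEBr linE_sumr.
under eq_bigr => j _ do rewrite linEZr linE_unit_row coef_row_pivot // mulr_natr eq_sym.
by rewrite (sum_delta (fun j => linE (nth 0 E j) x)) // subrr.
Qed.

Lemma linE_reduce_kernel f x : kernel E x -> linE (reduce E ps f) x = linE f x.
Proof.
move=> ker_x; rewrite linEBl linE_suml big1 ?subr0 // => i _.
by rewrite linEZl ker_x ?mulr0 // mem_nth.
Qed.

Lemma coef_reduce_pivot f j : (j < size E)%N ->
  coef (reduce E ps f) (nth 0%N ps j) = 0.
Proof.
move=> j_lt; rewrite -linE_unit_row linEBl linE_suml.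
under eq_bigr => i _ do rewrite linEZl linE_unit_row coef_row_pivot // mulr_natr.
by rewrite (sum_delta (fun i => coef f (nth 0%N ps i))) // linE_unit_row subrr.
Qed.

Lemma linE_reduce f x : linE (reduce E ps f) x = linE f (kproj x).
Proof.
rewrite -(linE_reduce_kernel f (kernel_kproj x)) /kproj linEBr linE_sumr.
rewrite big1 ?subr0 // => j _.
by rewrite linEZr linE_unit_row coef_reduce_pivot ?mulr0.
Qed.

Lemma reduce_eq0 h : (forall x, kernel E x -> linE h x = 0) -> reduce E ps h = 0.
Proof.
by move=> h_ker; apply: linE_self_eq0; rewrite linE_reduce; apply/h_ker/kernel_kproj.
Qed.

Lemma pivotP p : p \in ps <-> (p < n)%N /\ ~ leads_in (kernel E) p.
Proof.
case: rrefE => size_ps _ _ zero_before_pivot row_pivot; split.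
  move=> ps_p; have i_lt : (index p ps < size E)%N by rewrite -size_ps index_mem.
  have pivot_i : nth 0%N ps (index p ps) = p by rewrite nth_index.
  have p_lt : (p < n)%N by rewrite -pivot_i pivot_lt_n.
  split=> // -[z ker_z [zp z_after_p]].
  suff : linE (nth 0 E (index p ps)) z = 1.
    by rewrite ker_z ?mem_nth //; apply/eqP; rewrite eq_sym oner_eq0.
  rewrite /linE (bigD1 (Ordinal p_lt)) //= big1 => [|l /eqP l_neq_p].
    by rewrite (row_pivot _ (index p ps)) ?eqxx // -(coef_ord z) zp mulr1 addr0.
  case: (ltngtP (val l) p) => [l_lt_p|p_lt_l|l_eq_p].
  - by rewrite zero_before_pivot ?pivot_i ?mul0r.
  - by rewrite -(coef_ord z) z_after_p ?mulr0.
  - by case: l_neq_p; apply: val_inj.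
move=> [p_lt no_lead]; have [//|ps_p] := boolP (p \in ps); case: no_lead.
exists (kproj (unit_row p)); first exact: kernel_kproj.
have coef_kproj m : coef (kproj (unit_row p)) m = coef (unit_row p : vec) m -
    \sum_(j < size E) coef (nth 0 E j) p * ((nth 0%N ps j == m) && (m < n)%N)%:R.
  rewrite -linE_unit_row linEBl linE_suml linE_unit_row.
  by under eq_bigr => j _ do rewrite linEZl !linE_unit_row coef_unit_row.
split=> [|m p_lt_m]; rewrite coef_kproj coef_unit_row.
  rewrite eqxx p_lt big1 ?subr0 // => j _.
  case: eqP => [pj_eq|_]; last by rewrite mulr0.
  by rewrite -pj_eq mem_nth ?size_ps in ps_p.
rewrite ltn_eqF // sub0r big1 ?oppr0 // => j _; case: eqP => [pj_eq|_]; last by rewrite mulr0.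
by rewrite -[p]/(val (Ordinal p_lt)) coef_ord zero_before_pivot ?pj_eq ?mul0r.
Qed.

Lemma solP_Rset S : (forall x, kernel E x <-> implied_kernel S x) ->
  forall x, solP (in_Rset S E ps) x <-> solP (memS S) (kproj x).
Proof.
move=> kerS x; split=> [sol_x f Sf|sol_x g [_ [f Sf [_ ->]]]]; last first.
  by rewrite linE_reduce sol_x.
have [impl_f|not_impl_f] := classic (implied_eq S f).
  by rewrite ((kerS _).1 (kernel_kproj x)).
have [red_f0|red_f_neq0] := eqVneq (reduce E ps f) 0.
  by rewrite -linE_reduce red_f0 linE0l.
by rewrite -linE_reduce; apply: sol_x; split=> //; exists f.
Qed.

Lemma Rset_strictly_feasible S : (forall x, kernel E x <-> implied_kernel S x) ->
  exists x0, forall g, in_Rset S E ps g -> 0 < linE g x0.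
Proof.
move=> kerS; have [x0 Sx0 pos_x0] := exists_relint_point S.
have ker_x0 : kernel E x0 by apply/kerS => f Sf; apply.
by exists x0 => g [_ [f Sf [not_impl_f ->]]]; rewrite linE_reduce_kernel // pos_x0.
Qed.

End Rref.

Lemma rref_unique E ps E' ps' : rref E ps -> rref E' ps' ->
  (forall x, kernel E x <-> kernel E' x) -> ps = ps' /\ E = E'.
Proof.
move=> rrefE rrefE' kerE.
have pivot_eq p : p \in ps <-> p \in ps'.
  have leads_eq : leads_in (kernel E) p <-> leads_in (kernel E') p.
    by split=> -[z /kerE ker_z zp]; exists z.
  by rewrite (pivotP rrefE) (pivotP rrefE') leads_eq.
have ps_eq : ps = ps'.
  case: (rrefE) (rrefE') => _ sorted_ps _ _ _ [_ sorted_ps' _ _ _].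
  by apply: (irr_sorted_eq ltn_trans ltnn) => // p; apply/idP/idP => /pivot_eq.
split=> //; subst ps'.
have [size_ps _ _ _ _] := rrefE; have [size_ps' _ _ _ _] := rrefE'.
apply: (@eq_from_nth _ 0) => [|i i_lt]; first by rewrite -size_ps size_ps'.
have i_lt' : (i < size E')%N by rewrite -size_ps' size_ps.
have /eqP : reduce E ps (nth 0 E' i) = 0.
  by apply: (reduce_eq0 rrefE) => x /kerE ker_x; apply: ker_x; rewrite mem_nth.
rewrite subr_eq0 => /eqP ->.
under eq_bigr => j _.
  by rewrite (coef_row_pivot rrefE') -?size_ps' ?size_ps // scaler_nat eq_sym; over.
by rewrite (sum_delta (fun j => nth 0 E j)).
Qed.

End ReducedRowEchelon.

Lemma leq_size_rel (T U : eqType) (r : T -> U -> Prop) (s1 : seq T) (s2 : seq U) :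
  uniq s1 -> (forall x, x \in s1 -> exists2 y, y \in s2 & r x y) ->
  (forall x1 x2 y, x1 \in s1 -> x2 \in s1 -> r x1 y -> r x2 y -> x1 = x2) ->
  (size s1 <= size s2)%N.
Proof.
elim: s1 s2 => [//|x s1 IH] s2 /andP[s1'x uniq_s1] rel_s1 inj_s1.
have [y s2y rxy] := rel_s1 x (mem_head x s1).
have s2_gt0 : (0 < size s2)%N by case: (s2) s2y.
have s1_sub : {subset s1 <= x :: s1} by move=> z s1z; rewrite inE s1z orbT.
rewrite /= -(prednK s2_gt0) ltnS -(size_rem s2y); apply: IH => // [x' s1x'|x1 x2 z s1x1 s1x2].
  have [y' s2y' rx'y'] := rel_s1 x' (s1_sub x' s1x').
  exists y' => //; apply: rem_mem s2y'; apply: contraNneq s1'x => y'_eq.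
  by rewrite (inj_s1 x x' y) ?mem_head ?s1_sub // -y'_eq.
exact: inj_s1 (s1_sub _ s1x1) (s1_sub _ s1x2).
Qed.

Section Facets.
Variables (R : realFieldType) (n : nat).
Notation vec := 'rV[R]_n.
Implicit Types (T : seq vec) (s t v w x : vec).

Definition irredundant T := forall t, t \in T -> ~ redundant T t.

Lemma kernel_sub_scale t t' : t != 0 ->
  (forall v, linE t v = 0 -> linE t' v = 0) -> exists c, t' = c *: t.
Proof.
move=> t_neq0 ker_sub.
have /existsP[k tk] : [exists k, t 0 k != 0].
  apply: contraR t_neq0 => /existsPn t0; apply/eqP/rowP => l; rewrite mxE.
  by apply/eqP/negPn; apply: t0.
exists (t' 0 k / t 0 k); apply/rowP => l; rewrite mxE mulrAC.
have := ker_sub (t 0 k *: unit_row l - t 0 l *: unit_row k).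
rewrite !linEBr !linEZr !linE_unit_row !coef_ord mulrC subrr => /(_ erefl) /eqP.
by rewrite subr_eq0 => /eqP t'_l; apply/(canRL (mulfK tk)); rewrite mulrC t'_l mulrC.
Qed.

Lemma implied_ineq_triv_eq t t' : t != 0 -> t' != 0 ->
  (forall v, 0 <= linE t v -> 0 <= linE t' v) -> triv_eq t t'.
Proof.
move=> t_neq0 t'_neq0 t_t'.
have [c t'_eq] : exists c, t' = c *: t.
  apply: kernel_sub_scale => // v tv0; apply/eqP; rewrite eq_le.
  have := t_t' (- v); have := t_t' v; rewrite !linENr tv0 oppr0 lexx oppr_ge0.
  by move=> -> // ->.
have tt_gt0 := linE_self_gt0 t_neq0.
have c_gt0 : 0 < c.
  have := t_t' t (ltW tt_gt0); rewrite t'_eq linEZl pmulr_lge0 // lt_def => ->.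
  by rewrite andbT; apply: contraNneq t'_neq0 => c0; rewrite t'_eq c0 scale0r.
by exists c^-1; rewrite invr_gt0 t'_eq scalerA mulVf ?gt_eqF // scale1r.
Qed.

Lemma facet_point T t x0 : (forall s, s \in T -> 0 < linE s x0) ->
  t \in T -> ~ redundant T t ->
  exists2 w, linE t w = 0 & forall s, s \in T -> s != t -> 0 < linE s w.
Proof.
move=> pos_x0 Tt irr_t.
have [x1 sol_x1 tx1_lt0] :
    exists2 x1, solP (memS [seq s <- T | s != t]) x1 & linE t x1 < 0.
  apply: NNPP => no_x1; apply: irr_t => x sol_x; rewrite leNgt; apply/negP => tx.
  by apply: no_x1; exists x.
(* the point where the segment from [x0] to [x1] crosses [t = 0] *)
exists ((- linE t x1) *: x0 + linE t x0 *: x1) => [|s Ts s_neq_t].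
  by rewrite linEDr !linEZr mulNr mulrC addNr.
have sx1_ge0 : 0 <= linE s x1 by apply: sol_x1; rewrite /memS mem_filter s_neq_t.
rewrite linEDr !linEZr ltr_pwDl ?mulr_gt0 ?oppr_gt0 ?pos_x0 //.
by rewrite mulr_ge0 // ltW ?pos_x0.
Qed.

Lemma irredundant_triv_eq_mem T T' x0 t : equiv_ineq (memS T) (memS T') ->
  (forall s, s \in T -> 0 < linE s x0) -> (forall s, s \in T' -> s != 0) ->
  t \in T -> t != 0 -> ~ redundant T t -> exists2 t', t' \in T' & triv_eq t t'.
Proof.
move=> eqT pos_x0 T'_neq0 Tt t_neq0 irr_t.
have [w tw0 pos_w] := facet_point pos_x0 Tt irr_t.
have sign_w s : s \in T -> 0 <= linE s w /\ (linE s w = 0 -> s = t).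
  move=> Ts; have [->|s_neq_t] := eqVneq s t; first by rewrite tw0.
  have sw_gt0 := pos_w s Ts s_neq_t.
  by split=> [|sw0]; [exact: ltW|rewrite sw0 ltxx in sw_gt0].
have solT_w : solP (memS T) w by move=> s /sign_w[].
(* Otherwise [w - e t] would satisfy [T'] for small [e > 0], but not [t >= 0]. *)
have [t' T't' t'w0] : exists2 t', t' \in T' & linE t' w = 0.
  apply: NNPP => no_t'.
  have [|e e_gt0 sol_e] := @small_perturbation _ _ T' w (- t).
    by move=> s T's; split=> [|sw0]; [exact: (eqT w).1 solT_w s T's|case: no_t'; exists s].
  have /eqT /(_ t Tt) : solP (memS T') (w + e *: - t) by apply: sol_e; rewrite e_gt0 lexx.
  by rewrite linEDr linEZr linENr tw0 add0r mulrN oppr_ge0 pmulr_rle0 // leNgt linE_self_gt0.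
exists t' => //; apply: implied_ineq_triv_eq => // [|v tv]; first exact: T'_neq0.
have [|e e_gt0 sol_e] := @small_perturbation _ _ T w v.
  by move=> s /sign_w[sw_ge0 sw0]; split=> // /sw0 ->.
have /eqT /(_ t' T't') : solP (memS T) (w + e *: v) by apply: sol_e; rewrite e_gt0 lexx.
by rewrite linEDr linEZr t'w0 add0r pmulr_rge0.
Qed.

Lemma irredundant_triv_eq_inj T t1 t2 y : irredundant T ->
  t1 \in T -> t2 \in T -> triv_eq t1 y -> triv_eq t2 y -> t1 = t2.
Proof.
move=> irr_T Tt1 Tt2 [c1 [c1_gt0 t1_eq]] [c2 [c2_gt0 t2_eq]].
apply/eqP; apply: contraT => t12; case: (irr_T _ Tt1) => x sol_x.
have := sol_x t2; rewrite /memS mem_filter eq_sym t12 Tt2 => /(_ isT).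
by rewrite t1_eq t2_eq !linEZl !pmulr_rge0.
Qed.

Definition full_irredundant T := [/\ uniq T, forall t, t \in T -> t != 0,
  irredundant T & exists x0, forall t, t \in T -> 0 < linE t x0].

Lemma full_irredundant_triv_eq_sets T T' :
  full_irredundant T -> full_irredundant T' ->
  equiv_ineq (memS T) (memS T') -> triv_eq_sets T T'.
Proof.
move=> [uniq_T T_neq0 irr_T [x0 pos_x0]] [uniq_T' T'_neq0 irr_T' [x0' pos_x0']] eqT.
have eqT' : equiv_ineq (memS T') (memS T) by move=> x; apply: iff_sym.
have matchT t : t \in T -> exists2 t', t' \in T' & triv_eq t t'.
  move=> Tt; apply: (irredundant_triv_eq_mem eqT pos_x0 T'_neq0 Tt).
  - exact: T_neq0.
  - exact: irr_T.
have matchT' t' : t' \in T' -> exists2 t, t \in T & triv_eq t' t.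
  move=> T't'; apply: (irredundant_triv_eq_mem eqT' pos_x0' T_neq0 T't').
  - exact: T'_neq0.
  - exact: irr_T'.
split=> //; rewrite !undup_id //; apply/eqP; rewrite eqn_leq.
rewrite (leq_size_rel uniq_T matchT) ?(leq_size_rel uniq_T' matchT') //.
  by move=> t1 t2 y; apply: irredundant_triv_eq_inj irr_T'.
by move=> t1 t2 y; apply: irredundant_triv_eq_inj irr_T.
Qed.

End Facets.

Lemma min_char_Rset_full_irredundant (R : realFieldType) n (S E T : seq 'rV[R]_n) ps :
  (forall x, kernel E x <-> implied_kernel S x) ->
  min_char_set (in_Rset S E ps) T -> full_irredundant T.
Proof.
move=> kerS [uniq_T RT _ irr_T].
have [x0 pos_x0] := Rset_strictly_feasible ps kerS.
by split=> // [t /RT[]|]; last by exists x0 => t /RT /pos_x0.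
Qed.

Theorem theorem7 (R : realFieldType) (n : nat) (Sf Sg : seq 'rV[R]_n) :
  (forall f, f \in Sf -> f != 0) ->
  (forall g, g \in Sg -> g != 0) ->
  equiv_ineq (memS Sf) (memS Sg) ->
  forall (Ef Eg : seq 'rV[R]_n) (pf pg : seq nat),
  is_GJ Sf Ef pf -> is_GJ Sg Eg pg ->
  forall Sf' Sg' : seq 'rV[R]_n,
  min_char_set (in_Rset Sf Ef pf) Sf' ->
  min_char_set (in_Rset Sg Eg pg) Sg' ->
  Ef = Eg /\ triv_eq_sets Sf' Sg'.
Proof.
move=> _ _ eqS Ef Eg pf pg /is_GJ_rref[rrefF kerF] /is_GJ_rref[rrefG kerG] Sf' Sg' minF minG.
have eqS' : equiv_ineq (memS Sg) (memS Sf) by move=> x; apply: iff_sym.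
have kerFG x : kernel Ef x <-> kernel Eg x.
  by rewrite kerF kerG; split; apply: implied_kernel_sub.
have [pf_eq Ef_eq] := rref_unique rrefF rrefG kerFG; subst pg Eg; split=> //.
apply: full_irredundant_triv_eq_sets.
- exact: min_char_Rset_full_irredundant kerF minF.
- exact: min_char_Rset_full_irredundant kerG minG.
case: minF minG => [_ _ eqF _] [_ _ eqG _] x.
by rewrite eqF eqG (solP_Rset rrefF kerF) (solP_Rset rrefF kerG).
Qed.
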